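(* Let $\Theta$ be an S4K-logic characterised by a class $\mathcal C$ of general S4K-frames (i.e. $\chi\in\Theta$ iff every $\mathfrak F\in\mathcal C$ validates $\chi$). Then the iA-logic $\rho\Theta=\{\varphi\in\mathcal L_{\multimap}\mid t(\varphi)\in\Theta\}$ is characterised by the class $\hat\rho\mathcal C=\{\hat\rho\mathfrak F\mid\mathfrak F\in\mathcal C\}$ of general $\multimap$-frames.
   Context: $\mathcal L_{i,m}$: classical bimodal language with $\Box_i,\Box_m$. An S4K-logic is a set of $\mathcal L_{i,m}$-formulae containing all classical tautologies, the $\mathsf K$ axioms for $\Box_i$ and $\Box_m$, and $\Box_ip\to p$, $\Box_ip\to\Box_i\Box_ip$, closed under modus ponens, necessitation for both boxes and uniform substitution. The translation $t:\mathcal L_{\multimap}\to\mathcal L_{i,m}$: $t(p)=\Box_ip$, $t(\top)=\top$, $t(\bot)=\bot$, $t(\varphi\star\psi)=\Box_i(t\varphi\star t\psi)$ for $\star\in\{\wedge,\vee,\to\}$, $t(\varphi\multimap\psi)=\Box_i\Box_m(t\varphi\to t\psi)$. General S4K-frames $(X,R_i,R_m,P)$: $R_i$ preorder, $P$ a Boolean subalgebra of $\mathcal P(X)$ closed under $[i]$ and $[m]$ (universal modalities along $R_i$, $R_m$); validity uses valuations into $P$. $\hat\rho\mathfrak F:=([X],[R_i],[R_m^*],\hat\rho P)$ where $xR_m^*z$ iff $\exists y(xR_iy\wedge yR_mz)$; $[x]$ is the class of $x$ under $x\sim y\iff xR_iy\wedge yR_ix$; $[x][R_i][y]$ iff $xR_iy$;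 $[x][R_m^*][y]$ iff $xR_m^*y'$ for some $y'\sim y$; $\hat\rho P=\{\{[x]\mid x\in[i]b\}\mid b\in P\}$. Validity in a general $\multimap$-frame $(Y,\preceq,\sqsubset,Q)$: under all valuations into $Q$ the truth set is $Y$, with $\to$ interpreted along $\preceq$ and $\multimap$ along $\sqsubset$ ($a\Rrightarrow b=\{x\mid\forall y(x\sqsubset y,y\in a\Rightarrow y\in b)\}$). *)

Inductive iform : Type :=
| IVar  : nat -> iform
| ITop  : iform
| IBot  : iform
| IAnd  : iform -> iform -> iform
| IOr   : iform -> iform -> iform
| IImp  : iform -> iform -> iform
| IStr  : iform -> iform -> iform.

Inductive mform : Type :=
| MVar  : nat -> mform
| MTop  : mform
| MBot  : mform
| MAnd  : mform -> mform -> mform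
| MOr   : mform -> mform -> mform
| MImp  : mform -> mform -> mform
| MBoxI : mform -> mform
| MBoxM : mform -> mform.

Fixpoint tr (f : iform) : mform :=
  match f with
  | IVar p => MBoxI (MVar p)
  | ITop => MTop
  | IBot => MBot
  | IAnd a b => MBoxI (MAnd (tr a) (tr b))
  | IOr a b => MBoxI (MOr (tr a) (tr b))
  | IImp a b => MBoxI (MImp (tr a) (tr b))
  | IStr a b => MBoxI (MBoxM (MImp (tr a) (tr b)))
  end.

Fixpoint beval (v : mform -> bool) (f : mform) : bool :=
  match f with
  | MVar _ => v f
  | MTop => true
  | MBot => false
  | MAnd a b => andb (beval v a) (beval v b)
  | MOr a b => orb (beval v a) (beval v b)
  | MImp a b => orb (negb (beval v a)) (beval v b)
  | MBoxI _ => v f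
  | MBoxM _ => v f
  end.

Definition tautology (f : mform) : Prop := forall v, beval v f = true.

Fixpoint msubst (s : nat -> mform) (f : mform) : mform :=
  match f with
  | MVar p => s p
  | MTop => MTop
  | MBot => MBot
  | MAnd a b => MAnd (msubst s a) (msubst s b)
  | MOr a b => MOr (msubst s a) (msubst s b)
  | MImp a b => MImp (msubst s a) (msubst s b)
  | MBoxI a => MBoxI (msubst s a)
  | MBoxM a => MBoxM (msubst s a)
  end.

Definition is_S4K_logic (L : mform -> Prop) : Prop :=
  (forall f, tautology f -> L f) /\
  (forall a b, L (MImp (MBoxI (MImp a b)) (MImp (MBoxI a) (MBoxI b)))) /\
  (forall a b, L (MImp (MBoxM (MImp a b)) (MImp (MBoxM a) (MBoxM b)))) /\
  (L (MImp (MBoxI (MVar 0)) (MVar 0))) /\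
  (L (MImp (MBoxI (MVar 0)) (MBoxI (MBoxI (MVar 0))))) /\
  (forall a b, L a -> L (MImp a b) -> L b) /\
  (forall a, L a -> L (MBoxI a)) /\
  (forall a, L a -> L (MBoxM a)) /\
  (forall s a, L a -> L (msubst s a)).

Definition boxset {X : Type} (R : X -> X -> Prop) (A : X -> Prop) : X -> Prop :=
  fun x => forall y, R x y -> A y.

Record GFrame : Type := {
  gX  : Type;
  gRi : gX -> gX -> Prop;
  gRm : gX -> gX -> Prop;
  gP  : (gX -> Prop) -> Prop;
  gRi_refl  : forall x, gRi x x;
  gRi_trans : forall x y z, gRi x y -> gRi y z -> gRi x z;
  gP_empty : gP (fun _ => False);
  gP_full  : gP (fun _ => True);
  gP_compl : forall A, gP A -> gP (fun x => ~ A x);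
  gP_inter : forall A B, gP A -> gP B -> gP (fun x => A x /\ B x);
  gP_union : forall A B, gP A -> gP B -> gP (fun x => A x \/ B x);
  gP_boxi  : forall A, gP A -> gP (boxset gRi A);
  gP_boxm  : forall A, gP A -> gP (boxset gRm A)
}.

Fixpoint gsat (F : GFrame) (V : nat -> gX F -> Prop) (x : gX F) (f : mform) : Prop :=
  match f with
  | MVar p => V p x
  | MTop => True
  | MBot => False
  | MAnd a b => gsat F V x a /\ gsat F V x b
  | MOr a b => gsat F V x a \/ gsat F V x b
  | MImp a b => gsat F V x a -> gsat F V x b
  | MBoxI a => forall y, gRi F x y -> gsat F V y a
  | MBoxM a => forall y, gRm F x y -> gsat F V y a
  end.

Definition gvalid (F : GFrame) (f : mform) : Prop :=
  forall V : nat -> gX F -> Prop, (forall p, gP F (V p)) -> forall x, gsat F V x f.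

Record MFrame : Type := {
  mY  : Type;
  mle : mY -> mY -> Prop;
  msq : mY -> mY -> Prop;
  mQ  : (mY -> Prop) -> Prop
}.

Fixpoint msat (G : MFrame) (V : nat -> mY G -> Prop) (x : mY G) (f : iform) : Prop :=
  match f with
  | IVar p => V p x
  | ITop => True
  | IBot => False
  | IAnd a b => msat G V x a /\ msat G V x b
  | IOr a b => msat G V x a \/ msat G V x b
  | IImp a b => forall y, mle G x y -> msat G V y a -> msat G V y b
  | IStr a b => forall y, msq G x y -> msat G V y a -> msat G V y b
  end.

Definition mvalid (G : MFrame) (f : iform) : Prop :=
  forall V : nat -> mY G -> Prop, (forall p, mQ G (V p)) -> forall x, msat G V x f.

Section RhoHat.
Variable F : GFrame.

Definition req (x y : gX F) : Prop := gRi F x y /\ gRi F y x.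
Definition cls (x : gX F) : gX F -> Prop := fun y => req x y.
Definition RmStar (x z : gX F) : Prop := exists y, gRi F x y /\ gRm F y z.

Definition Cls : Type := { c : gX F -> Prop | exists x, c = cls x }.

Definition cls_le (c d : Cls) : Prop :=
  exists x y, proj1_sig c = cls x /\ proj1_sig d = cls y /\ gRi F x y.

Definition cls_sq (c d : Cls) : Prop :=
  exists x y, proj1_sig c = cls x /\ proj1_sig d = cls y /\
    exists y', req y' y /\ RmStar x y'.

Definition cls_Q (A : Cls -> Prop) : Prop :=
  exists b, gP F b /\
    forall c : Cls, A c <-> exists x, proj1_sig c = cls x /\ boxset (gRi F) b x.
End RhoHat.

Definition rho_hat (F : GFrame) : MFrame :=
  {| mY := Cls F; mle := cls_le F; msq := cls_sq F; mQ := cls_Q F |}.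

Definition rho (L : mform -> Prop) : iform -> Prop := fun f => L (tr f).

From Stdlib Require Import FunctionalExtensionality PropExtensionality.

(* For a single general S4K-frame F we show that F validates
   t(phi) iff the class frame rho-hat F validates phi; the proposition then
   follows at once from the characterisation of Theta by the class C.

   The core is a truth lemma: if a valuation V on classes is the one induced
   by a valuation W on points (V p holds at [x] iff x lies in [i](W p)), then
   t(phi) holds at x under W iff phi holds at [x] under V.  Its proof uses
   that the truth set of every translated formula is R_i-upward closed, and
   descriptions of the class relations [R_i] and [R_m*] in terms of
   representatives.  Validity transfers in both directions because the
   admissible valuations correspond: a valuation W into P induces one into
   rho-hat P, and every admissible V on classes is induced by the valuation
   x |-> V p [x], which is again admissible since it equals some [i]b. *)

Section ClassFrame.
Variable F : GFrame.

Lemma cls_eq_req (x y : gX F) : cls F x = cls F y -> req F x y.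
Proof.
  intro E. assert (Hy : cls F y y) by (split; apply gRi_refl).
  rewrite <- E in Hy. exact Hy.
Qed.

Lemma boxset_up (b : gX F -> Prop) (x y : gX F) :
  boxset (gRi F) b x -> gRi F x y -> boxset (gRi F) b y.
Proof. intros Hx Rxy z Ryz. apply Hx. eapply gRi_trans; eauto. Qed.

Lemma boxset_cls (b : gX F -> Prop) (x y : gX F) :
  cls F x = cls F y -> boxset (gRi F) b y -> boxset (gRi F) b x.
Proof. intros E Hy. apply cls_eq_req in E as [_ Ryx]. exact (boxset_up b y x Hy Ryx). Qed.

Lemma boxset_boxset (b : gX F -> Prop) (x : gX F) :
  boxset (gRi F) (boxset (gRi F) b) x <-> boxset (gRi F) b x.
Proof.
  split.
  - intro H. exact (H x (gRi_refl F x)).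
  - intros H y Rxy. exact (boxset_up b x y H Rxy).
Qed.

(* Persistence: the truth set of a translated formula is R_i-upward closed,
   as every t(phi) other than top and bottom is of the form Box_i psi. *)
Lemma tr_persistent (W : nat -> gX F -> Prop) (phi : iform) (x y : gX F) :
  gsat F W x (tr phi) -> gRi F x y -> gsat F W y (tr phi).
Proof.
  destruct phi; simpl; intros H Rxy; auto;
    intros z Ryz; apply H; eapply gRi_trans; eauto.
Qed.

Definition mk (x : gX F) : Cls F := exist _ (cls F x) (ex_intro _ x eq_refl).

Lemma cls_le_rep (c d : Cls F) (x y : gX F) :
  proj1_sig c = cls F x -> proj1_sig d = cls F y -> cls_le F c d -> gRi F x y.
Proof.
  intros Hc Hd [x1 [y1 [E1 [E2 R]]]].
  rewrite Hc in E1. rewrite Hd in E2.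
  apply cls_eq_req in E1 as [Rxx1 _]. apply cls_eq_req in E2 as [_ Ry1y].
  eapply gRi_trans; [eapply gRi_trans|]; eauto.
Qed.

Lemma cls_le_intro (c : Cls F) (x y : gX F) :
  proj1_sig c = cls F x -> gRi F x y -> cls_le F c (mk y).
Proof. intros Hc Rxy. exists x, y. repeat split; auto. Qed.

Lemma cls_sq_rep (c d : Cls F) (x y : gX F) :
  proj1_sig c = cls F x -> proj1_sig d = cls F y -> cls_sq F c d ->
  exists w z, gRi F x w /\ gRm F w z /\ req F z y.
Proof.
  intros Hc Hd [x1 [y1 [E1 [E2 [z [[Rzy1 Ry1z] [w [Rx1w Rwz]]]]]]]].
  rewrite Hc in E1. rewrite Hd in E2.
  apply cls_eq_req in E1 as [Rxx1 _]. apply cls_eq_req in E2 as [Ryy1 Ry1y].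
  exists w, z. repeat split; eauto using gRi_trans.
Qed.

Lemma cls_sq_intro (c : Cls F) (x w z : gX F) :
  proj1_sig c = cls F x -> gRi F x w -> gRm F w z -> cls_sq F c (mk z).
Proof.
  intros Hc Rxw Rwz. exists x, z. repeat split; auto.
  exists z. split; [split; apply gRi_refl | exists w; auto].
Qed.

Definition lift_val (W : nat -> gX F -> Prop) (p : nat) (c : Cls F) : Prop :=
  exists x, proj1_sig c = cls F x /\ boxset (gRi F) (W p) x.

Section Truth.
Variable W : nat -> gX F -> Prop.
Variable V : nat -> Cls F -> Prop.
Hypothesis V_lift : forall p c, V p c <-> lift_val W p c.

Definition agrees (phi : iform) : Prop :=
  forall (c : Cls F) (x : gX F), proj1_sig c = cls F x ->
    (gsat F W x (tr phi) <-> msat (rho_hat F) V c phi).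

Lemma agrees_var (p : nat) : agrees (IVar p).
Proof.
  intros c x Hc; simpl. rewrite V_lift. split.
  - intro H. exists x. split; auto.
  - intros [x' [Hx' Hb]]. rewrite Hc in Hx'. exact (boxset_cls (W p) x x' Hx' Hb).
Qed.

Lemma agrees_and (a b : iform) : agrees a -> agrees b -> agrees (IAnd a b).
Proof.
  intros Ha Hb c x Hc; simpl. rewrite <- (Ha c x Hc), <- (Hb c x Hc). split.
  - intro H. exact (H x (gRi_refl F x)).
  - intros [H1 H2] y Rxy. split; eapply tr_persistent; eauto.
Qed.

Lemma agrees_or (a b : iform) : agrees a -> agrees b -> agrees (IOr a b).
Proof.
  intros Ha Hb c x Hc; simpl. rewrite <- (Ha c x Hc), <- (Hb c x Hc). split.
  - intro H. exact (H x (gRi_refl F x)).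
  - intros [H1 | H2] y Rxy; [left | right]; eapply tr_persistent; eauto.
Qed.

Lemma agrees_imp (a b : iform) : agrees a -> agrees b -> agrees (IImp a b).
Proof.
  intros Ha Hb c x Hc; simpl. split.
  - intros H d Hle Had. destruct (proj2_sig d) as [y Ey].
    apply (Hb _ y Ey). apply H.
    + exact (cls_le_rep c _ x y Hc Ey Hle).
    + exact (proj2 (Ha _ y Ey) Had).
  - intros H y Rxy Hay.
    apply (Hb (mk y) y eq_refl), H.
    + exact (cls_le_intro c x y Hc Rxy).
    + exact (proj1 (Ha (mk y) y eq_refl) Hay).
Qed.

Lemma agrees_str (a b : iform) : agrees a -> agrees b -> agrees (IStr a b).
Proof.
  intros Ha Hb c x Hc; simpl. split.
  - intros H d Hsq Had. destruct (proj2_sig d) as [y Ey].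
    destruct (cls_sq_rep c _ x y Hc Ey Hsq) as [w [z [Rxw [Rwz [Rzy Ryz]]]]].
    apply (Hb _ y Ey). apply (Ha _ y Ey) in Had.
    eapply tr_persistent; [| exact Rzy].
    apply (H w Rxw z Rwz). eapply tr_persistent; eauto.
  - intros H w Rxw z Rwz Haz.
    apply (Hb (mk z) z eq_refl), H.
    + exact (cls_sq_intro c x w z Hc Rxw Rwz).
    + exact (proj1 (Ha (mk z) z eq_refl) Haz).
Qed.

Lemma truth_lemma (phi : iform) : agrees phi.
Proof.
  induction phi.
  - apply agrees_var.
  - intros c x _; simpl; tauto.
  - intros c x _; simpl; tauto.
  - apply agrees_and; assumption.
  - apply agrees_or; assumption.
  - apply agrees_imp; assumption.
  - apply agrees_str; assumption.
Qed.
End Truth.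

Lemma cls_Q_points (A : Cls F -> Prop) (b : gX F -> Prop) :
  (forall c, A c <-> exists x, proj1_sig c = cls F x /\ boxset (gRi F) b x) ->
  forall x, A (mk x) <-> boxset (gRi F) b x.
Proof.
  intros HA x. rewrite HA. split.
  - intros [x' [E Hx']]. exact (boxset_cls b x x' E Hx').
  - intro Hx. exists x. split; auto.
Qed.

Lemma admissible_is_lift (V : nat -> Cls F -> Prop) :
  (forall p, cls_Q F (V p)) ->
  (forall p, gP F (fun x => V p (mk x))) /\
  (forall p c, V p c <-> lift_val (fun q x => V q (mk x)) p c).
Proof.
  intro HQ. split; intro p; destruct (HQ p) as [b [Hb HV]];
    pose proof (cls_Q_points (V p) b HV) as Hpts.
  - replace (fun x => V p (mk x)) with (boxset (gRi F) b).
    + apply gP_boxi, Hb.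
    + extensionality x. apply propositional_extensionality. symmetry. apply Hpts.
  - intro c. rewrite HV. unfold lift_val.
    split; intros [x [Ex Hx]]; exists x; split; auto.
    + intros y Rxy. apply Hpts. exact (boxset_up b x y Hx Rxy).
    + apply boxset_boxset. intros y Rxy. apply Hpts, Hx, Rxy.
Qed.

Lemma valid_tr_iff_rho_hat (phi : iform) :
  gvalid F (tr phi) <-> mvalid (rho_hat F) phi.
Proof.
  split.
  - intros H V HQ [c [x Ex]].
    destruct (admissible_is_lift V HQ) as [HP HV].
    apply (truth_lemma _ V HV phi (exist _ c (ex_intro _ x Ex)) x Ex), H, HP.
  - intros H W HP x.
    apply (truth_lemma W (lift_val W) (fun p c => iff_refl _) phi (mk x) x eq_refl).
    apply H. intro p. exists (W p). split; [apply HP | intro c; reflexivity].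
Qed.
End ClassFrame.

Theorem proposition4p13 :
  forall (Theta : mform -> Prop) (C : GFrame -> Prop),
    is_S4K_logic Theta ->
    (forall chi, Theta chi <-> (forall F, C F -> gvalid F chi)) ->
    forall phi : iform,
      rho Theta phi <-> (forall F, C F -> mvalid (rho_hat F) phi).
Proof.
  intros Theta C _ HC phi. unfold rho. rewrite HC.
  split; intros H F HF; apply valid_tr_iff_rho_hat; auto.
Qed.
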